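(* Let $\Delta^m$ be the last matrix produced by the Incremental Sweeping Algorithm applied to a connection matrix $\Delta\in\mathbb F^{m\times m}$. For every $j$, if the $j$-th column of $\Delta^m$ is nonzero then the $j$-th row of $\Delta^m$ is zero; equivalently $\Delta^m_{\cdot j}\,\Delta^m_{j\cdot}=0$ (outer product) for all $j$.
   Context: Throughout, $\mathbb F$ is a field and $m\ge1$. $A_{i\cdot}$, $A_{\cdot j}$ denote the $i$-th row and $j$-th column of a matrix $A$. $U^{pq}$ is the $m\times m$ matrix whose only nonzero entry is a $1$ in position $(p,q)$. Superscripts on matrices are indices, not powers. A connection matrix (over $\mathbb F$) is a matrix $\Delta\in\mathbb F^{m\times m}$ together with a partition $\{1,\dots,m\}=J_0\sqcup\cdots\sqcup J_b$ (the column/row partition; the $J_k$ need not consist of consecutive integers) such that $\Delta$ is upper triangular, $\Delta\Delta=0$, and $\Delta_{ij}=0$ unless $i<j$ and $(i,j)\in\bigcup_{k=1}^bJ_{k-1}\times J_k$. For $1\le r\le m-1$ the $r$-th diagonal is $\{(j-r,j):r<j\le m\}$. Incremental Sweeping Algorithm (ISA) applied to a connection matrix $\Delta$: set $\Delta^0=\Delta^1=\Delta$. For $r=1,\dots,m-1$ in turn: (Markup) for every position $(j-r,j)$ on the $r$-th diagonal with $\Delta^r_{j-r,j}\ne0$ such that no position in column $j$ was marked as a primary pivot at an earlier iteration: if some position $(j-r,p)$ of row $j-r$ was marked as a primary pivot at an earlier iteration, mark $(j-r,j)$ as a change-of-basis pivot of iteration $r$; otherwise mark $(j-r,j)$ permanently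 as a primary pivot. (Update) Let $T^r=I-\sum \frac{\Delta^r_{j-r,j}}{\Delta^r_{j-r,p}}U^{pj}$, the sum running over all change-of-basis pivots $(j-r,j)$ of iteration $r$, where $(j-r,p)$ is the primary pivot position in row $j-r$; set $\Delta^{r+1}=(T^r)^{-1}\Delta^rT^r$. *)

From HB Require Import structures.
From mathcomp Require Import all_boot all_order all_algebra.
Set Implicit Arguments. Unset Strict Implicit. Unset Printing Implicit Defensive.
Import GRing.Theory.
Local Open Scope ring_scope.

(* Indices are 0-based: 'I_m = {0,...,m-1}.  Positions are pairs (i, j). *)

(* Connection matrix with respect to a partition J_0 ⊔ ... ⊔ J_b of the
   index set, encoded by deg : 'I_m -> nat (i ∈ J_(deg i)), with deg i <= b. *)
Definition connection_matrix (F : fieldType) (m : nat) (D : 'M[F]_m)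
    (b : nat) (deg : 'I_m -> nat) : Prop :=
  [/\ forall i, (deg i <= b)%N,
      forall i j : 'I_m, (j < i)%N -> D i j = 0,
      D *m D = 0 &
      forall i j : 'I_m, D i j != 0 ->
        (i < j)%N /\ (1 <= deg j <= b)%N /\ deg j = (deg i).+1 ].

Section ISA.
Variables (F : fieldType) (m : nat).
Implicit Types (D : 'M[F]_m) (P : {set 'I_m * 'I_m}).

(* P = set of positions marked as primary pivots at earlier iterations. *)

Definition isa_cand D P (r : nat) (i j : 'I_m) : bool :=
  [&& (j == (i + r)%N :> nat), D i j != 0 & [forall q, (q, j) \notin P]].

Definition has_primary P (i : 'I_m) : bool := [exists p, (i, p) \in P].

Definition primary_col P (i : 'I_m) : 'I_m := odflt i [pick p | (i, p) \in P].

Definition isa_cob D P r (i j : 'I_m) : bool :=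
  isa_cand D P r i j && has_primary P i.

Definition isa_newprim D P r : {set 'I_m * 'I_m} :=
  [set x | isa_cand D P r x.1 x.2 && ~~ has_primary P x.1].

Definition isa_T D P r : 'M[F]_m :=
  1%:M - \sum_(i : 'I_m) \sum_(j : 'I_m | isa_cob D P r i j)
           (D i j / D i (primary_col P i)) *: delta_mx (primary_col P i) j.

Definition isa_step (r : nat) (s : 'M[F]_m * {set 'I_m * 'I_m}) :=
  let: (D, P) := s in
  let T := isa_T D P r in
  (invmx T *m D *m T, P :|: isa_newprim D P r).

(* state after iterations 1..k; its matrix component is Delta^(k+1) *)
Fixpoint isa_iter (D0 : 'M[F]_m) (k : nat) : 'M[F]_m * {set 'I_m * 'I_m} :=
  match k with
  | 0 => (D0, set0)
  | k'.+1 => isa_step k'.+1 (isa_iter D0 k')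
  end.

Definition isa_final (D0 : 'M[F]_m) : 'M[F]_m := (isa_iter D0 m.-1).1.

End ISA.

From HB Require Import structures.
From mathcomp Require Import all_boot all_order all_algebra.
From mathcomp Require Import zify.
Set Implicit Arguments. Unset Strict Implicit. Unset Printing Implicit Defensive.
Import GRing.Theory.
Local Open Scope ring_scope.

(* Iteration r of the sweep is the similarity D |-> (1 + N) D (1 - N) with
   N^2 = 0, so D^2 = 0 is preserved.  By induction on r, on the swept part
   (entries (i, j) with j < i + r) the primary pivots are exactly the lowest
   nonzero entries of their columns and occupy distinct rows and columns: the
   column sweep clears the change-of-basis column on and below its row, the
   row operations only add lower rows to higher ones, and a nonzero entry of
   the r-th diagonal with nothing below it becomes a new primary pivot.  At the
   end the whole matrix is reduced, so its nonzero columns are linearly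
   independent; as D^2 = 0 gives sum_t D_tl D_.t = 0 for every l, the row j of
   each nonzero column j vanishes. *)

Section Reduced.
Variables (F : fieldType) (m : nat).
Implicit Types (D : 'M[F]_m) (P : {set 'I_m * 'I_m}).

(* P plays the role of the set of primary pivots; only the entries (a, b)
   with b < a + r, i.e. the diagonals swept so far, are constrained. *)
Record reduced_upto D P (r : nat) : Prop := ReducedUpto {
  pivot_neq0 : forall a b : 'I_m, (a, b) \in P -> D a b != 0;
  pivot_lt : forall a b : 'I_m, (a, b) \in P -> (b < a + r)%N;
  pivot_row_uniq : forall a b c : 'I_m, (a, b) \in P -> (a, c) \in P -> b = c;
  pivot_col_uniq : forall a b c : 'I_m, (a, c) \in P -> (b, c) \in P -> a = b;
  pivot_low : forall a b : 'I_m, D a b != 0 -> (b < a + r)%N ->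
    exists2 k : 'I_m, (a <= k)%N & (k, b) \in P }.

Lemma below_pivot_eq0 D P r (i p a : 'I_m) :
  reduced_upto D P r -> (i, p) \in P -> (i < a)%N -> D a p = 0.
Proof.
move=> hR ip ia; apply/eqP; apply: contraT => nz.
have [k ak kp] := pivot_low hR nz (ltac:(have := pivot_lt hR ip; lia)).
have ki := pivot_col_uniq hR kp ip; subst k; lia.
Qed.

Lemma unpivoted_eq0 D P r (a b : 'I_m) : reduced_upto D P r ->
  (forall q, (q, b) \notin P) -> (b < a + r)%N -> D a b = 0.
Proof.
move=> hR nb br; apply/eqP; apply: contraT => nz.
by have [k _ kb] := pivot_low hR nz br; have := nb k; rewrite kb.
Qed.

Definition pivot_row P (t : 'I_m) : 'I_m := odflt t [pick k | (k, t) \in P].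

Lemma pivot_rowP D P (a t : 'I_m) : reduced_upto D P m -> D a t != 0 ->
  (a <= pivot_row P t)%N /\ (pivot_row P t, t) \in P.
Proof.
move=> hR nz; have [k ak kt] := pivot_low hR nz (ltac:(have := ltn_ord t; lia)).
rewrite /pivot_row; case: pickP => [k' kt'|/(_ k)]; last by rewrite kt.
by rewrite -(pivot_col_uniq hR kt kt').
Qed.

(* The columns of a reduced matrix have pairwise distinct lowest nonzero
   entries, hence are linearly independent. *)
Lemma reduced_mulmx_eq0 n D P (V : 'M[F]_(m, n)) (a t : 'I_m) (l : 'I_n) :
  reduced_upto D P m -> D *m V = 0 -> D a t != 0 -> V t l = 0.
Proof.
move=> hR DV0 nz; apply/eqP; apply: contraT => Vnz.
pose S t := (V t l != 0) && [exists a, D a t != 0].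
have St : S t by rewrite /S Vnz /=; apply/existsP; exists a.
case: (@arg_maxnP _ t S (fun t => nat_of_ord (pivot_row P t)) St) => u.
rewrite /S => /andP[Vul /existsP[a' a'u]] umax.
set p := pivot_row P u; have [_ pu] := pivot_rowP hR a'u.
have : (D *m V) p l = 0 by rewrite DV0 mxE.
rewrite mxE (bigD1 u) //= [X in _ + X]big1 ?addr0; last first.
  move=> t' t'u; case: (eqVneq (D p t') 0) => [->|pt']; first by rewrite mul0r.
  case: (eqVneq (V t' l) 0) => [->|Vt'l]; first by rewrite mulr0.
  have St' : S t' by rewrite /S Vt'l /=; apply/existsP; exists p.
  have [le1 pt'P] := pivot_rowP hR pt'; have le2 := umax t' St'.
  have e : pivot_row P t' = p by apply: ord_inj; rewrite /geq -/p in le2; lia.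
  by rewrite e in pt'P; rewrite (pivot_row_uniq hR pt'P pu) eqxx in t'u.
by move/eqP; rewrite mulf_eq0 (negbTE (pivot_neq0 hR pu)) (negbTE Vul).
Qed.

Lemma reduced_upto_init D : (forall a b : 'I_m, D a b != 0 -> (a < b)%N) ->
  reduced_upto D set0 1.
Proof.
move=> Dtriu; split=> [a b|a b|a b c|a b c|a b /Dtriu]; rewrite ?inE //; lia.
Qed.

Lemma conjmx_sq0 (A T : 'M[F]_m) : T \in unitmx -> A *m A = 0 ->
  (invmx T *m A *m T) *m (invmx T *m A *m T) = 0.
Proof.
move=> Tu AA0; rewrite -!mulmxA [T *m _]mulmxA mulmxV // mul1mx.
by rewrite [A *m (A *m _)]mulmxA AA0 !mul0mx mulmx0.
Qed.

End Reduced.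

Lemma primary_colP (m : nat) (P : {set 'I_m * 'I_m}) (i : 'I_m) :
  has_primary P i -> (i, primary_col P i) \in P.
Proof.
case/existsP=> p ip; rewrite /primary_col.
by case: pickP => [q -> //|/(_ p)]; rewrite ip.
Qed.

Section Step.
Variables (F : fieldType) (m : nat) (D : 'M[F]_m) (P : {set 'I_m * 'I_m}) (r : nat).

Definition isa_N : 'M[F]_m :=
  \sum_(i : 'I_m) \sum_(j : 'I_m | isa_cob D P r i j)
     (D i j / D i (primary_col P i)) *: delta_mx (primary_col P i) j.

Local Notation N := isa_N.
Local Notation T := (isa_T D P r).
Local Notation P' := (P :|: isa_newprim D P r).

Lemma isa_TE : T = 1%:M - N. Proof. by []. Qed.

Lemma isa_cobP (i j : 'I_m) : isa_cob D P r i j ->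
  [/\ (j : nat) = (i + r)%N, D i j != 0, forall q, (q, j) \notin P & has_primary P i].
Proof. by case/andP=> /and3P[/eqP ? ? /forallP ?] ?. Qed.

Lemma isa_newprimP (i j : 'I_m) : (i, j) \in isa_newprim D P r ->
  [/\ (j : nat) = (i + r)%N, D i j != 0, forall q, (q, j) \notin P
    & forall p, (i, p) \notin P].
Proof.
rewrite inE => /andP[/and3P[/eqP ? ? /forallP ?] /existsPn ?]; by split.
Qed.

Lemma isa_cob_inj (i i' j : 'I_m) : isa_cob D P r i j -> isa_cob D P r i' j -> i = i'.
Proof. by move=> /isa_cobP[e1 _ _ _] /isa_cobP[e2 _ _ _]; apply: ord_inj; lia. Qed.

Lemma isa_N_entry (a b : 'I_m) : N a b =
  \sum_(i : 'I_m) \sum_(j : 'I_m | isa_cob D P r i j)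
     (D i j / D i (primary_col P i)) * ((a == primary_col P i) && (b == j))%:R.
Proof.
rewrite summxE; apply: eq_bigr => i _; rewrite summxE.
by apply: eq_bigr => j _; rewrite !mxE.
Qed.

Lemma isa_N_support (a b : 'I_m) : N a b != 0 ->
  exists2 i, isa_cob D P r i b & a = primary_col P i.
Proof.
rewrite isa_N_entry => nz.
case: (pickP (fun i => isa_cob D P r i b && (a == primary_col P i))) => [i /andP[ib /eqP ->]|none].
  by exists i.
move: nz; rewrite big1 ?eqxx // => i _; apply: big1 => j ij.
case: eqP => [ea|_]; last by rewrite mulr0.
case: eqP => [eb|_]; last by rewrite mulr0.
by subst; have := none i; rewrite ij eqxx.
Qed.

Lemma isa_N_pivot (i j : 'I_m) : isa_cob D P r i j ->
  N (primary_col P i) j = D i j / D i (primary_col P i).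
Proof.
move=> ij; rewrite isa_N_entry (bigD1 i) //= [X in _ + X]big1 ?addr0.
  rewrite (bigD1 j) //= [X in _ + X]big1 ?addr0 ?eqxx ?mulr1 // => j' /andP[_ /negbTE].
  by rewrite eq_sym => ->; rewrite andbF mulr0.
move=> i' i'i; rewrite big1 // => j' i'j'.
case: (j =P j') => [ejj'|_]; last by rewrite andbF mulr0.
by subst j'; rewrite (isa_cob_inj ij i'j') eqxx in i'i.
Qed.

(* N is supported on pairs (pivot column, change-of-basis column), and no
   change-of-basis column is a pivot column. *)
Lemma isa_N_sq0 : N *m N = 0.
Proof.
apply/matrixP => a b; rewrite !mxE; apply: big1 => t _.
case: (eqVneq (N a t) 0) => [->|Nat]; first by rewrite mul0r.
case: (eqVneq (N t b) 0) => [->|Ntb]; first by rewrite mulr0.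
have [i it _] := isa_N_support Nat; have [i' i'b et] := isa_N_support Ntb.
have [_ _ nq _] := isa_cobP it; have [_ _ _ hp] := isa_cobP i'b.
by have := nq i'; rewrite et (primary_colP hp).
Qed.

Lemma isa_T_unit : T \in unitmx /\ invmx T = 1%:M + N.
Proof.
have TN : T *m (1%:M + N) = 1%:M.
  by rewrite isa_TE mulmxBl mul1mx mulmxDr mulmx1 isa_N_sq0 addr0 addrK.
have [Tu _] := mulmx1_unit TN; split=> //.
by rewrite -[invmx T]mulmx1 -{1}TN mulmxA mulVmx ?mul1mx.
Qed.

Hypothesis hR : reduced_upto D P r.

Lemma isa_N_lt (a t : 'I_m) : N a t != 0 -> (a < t)%N.
Proof.
case/isa_N_support=> i it ->; have [-> _ _ hp] := isa_cobP it.
have := pivot_lt hR (primary_colP hp); lia.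
Qed.

Local Notation M := (D *m T).

Lemma isa_M_uncob (a b : 'I_m) : (forall i, ~~ isa_cob D P r i b) -> M a b = D a b.
Proof.
move=> nocob; rewrite isa_TE mulmxBr mulmx1 !mxE big1 ?subr0 // => t _.
case: (eqVneq (N t b) 0) => [->|Ntb]; first by rewrite mulr0.
by have [i ib _] := isa_N_support Ntb; have := nocob i; rewrite ib.
Qed.

(* Below row i both column j (pivotless) and column p (pivot in row i) already
   vanish; in row i the sweep cancels the entry. *)
Lemma isa_M_cob (i a j : 'I_m) : isa_cob D P r i j -> (i <= a)%N -> M a j = 0.
Proof.
move=> ij ia; have [ej _ nq hp] := isa_cobP ij.
set p := primary_col P i; have ip : (i, p) \in P := primary_colP hp.
rewrite isa_TE mulmxBr mulmx1 !mxE (bigD1 p) //= [X in _ - (_ + X)]big1 ?addr0.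
  rewrite isa_N_pivot //; case: (ltnP i a) => [lt|ge].
    rewrite (below_pivot_eq0 hR ip lt) mul0r subr0.
    by apply: (unpivoted_eq0 hR nq); lia.
  have -> : a = i by apply: ord_inj; lia.
  by rewrite mulrC mulfVK ?subrr // (pivot_neq0 hR ip).
move=> t tp; case: (eqVneq (N t j) 0) => [->|Ntj]; first by rewrite mulr0.
have [i' i'j et] := isa_N_support Ntj.
by move: tp; rewrite et -(isa_cob_inj ij i'j) eqxx.
Qed.

Lemma isa_M_low (a b : 'I_m) : M a b != 0 -> (b < a + r.+1)%N ->
  exists2 k : 'I_m, (a <= k)%N & (k, b) \in P'.
Proof.
move=> nz ba; case: (pickP (fun i => isa_cob D P r i b)) => [i ib|nocob].
  case: (leqP i a) => ia; first by rewrite (isa_M_cob ib ia) eqxx in nz.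
  by have [eb _ _ _] := isa_cobP ib; lia.
move: nz; rewrite isa_M_uncob => [nz|i]; last by rewrite nocob.
case: (ltnP b (a + r)) => br.
  by have [k ak kb] := pivot_low hR nz br; exists k; rewrite // inE kb.
case: (pickP (fun q => (q, b) \in P)) => [q qb|nopiv].
  by exists q; [have := pivot_lt hR qb; lia | rewrite inE qb].
have cand : isa_cand D P r a b.
  by apply/and3P; split; [apply/eqP; lia | | apply/forallP => q; rewrite nopiv].
exists a => //; rewrite !inE /= cand /=; apply/orP; right.
by move: (nocob a); rewrite /isa_cob cand => /negbT.
Qed.

Local Notation D' := (invmx T *m D *m T).

Lemma isa_step_entry (a b : 'I_m) : D' a b = M a b + \sum_t N a t * M t b.
Proof.
by have [_ ->] := isa_T_unit; rewrite -mulmxA mulmxDl mul1mx !mxE.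
Qed.

Lemma isa_step_fixed (a b : 'I_m) : (forall i, ~~ isa_cob D P r i b) ->
  (forall t : 'I_m, (a < t)%N -> D t b = 0) -> D' a b = D a b.
Proof.
move=> nocob Db0; rewrite isa_step_entry isa_M_uncob // big1 ?addr0 // => t _.
case: (eqVneq (N a t) 0) => [->|Nat]; first by rewrite mul0r.
by rewrite isa_M_uncob // Db0 ?mulr0 // isa_N_lt.
Qed.

Lemma isa_step_pivot_neq0 (a b : 'I_m) : (a, b) \in P' -> D' a b != 0.
Proof.
rewrite inE => /orP[ab|/isa_newprimP[eb nz nq np]].
  rewrite isa_step_fixed ?(pivot_neq0 hR ab) // => [i|t ta].
    by apply/negP => /isa_cobP[_ _ /(_ a)]; rewrite ab.
  exact: below_pivot_eq0 hR ab ta.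
rewrite isa_step_fixed // => [i|t ta].
  apply/negP => /isa_cobP[ei _ _ /existsP[p ip]].
  have ia : i = a by apply: ord_inj; lia.
  by have := np p; rewrite -ia ip.
apply: (unpivoted_eq0 hR nq); lia.
Qed.

Lemma isa_step_reduced : reduced_upto D' P' r.+1.
Proof.
split.
- exact: isa_step_pivot_neq0.
- by move=> a b; rewrite inE => /orP[/(pivot_lt hR)|/isa_newprimP[-> _ _ _]]; lia.
- move=> a b c; rewrite !in_setU.
  case/orP=> [ab|/isa_newprimP[eb _ _ na]]; case/orP=> [ac|/isa_newprimP[ec _ _ na']].
  + exact (pivot_row_uniq hR ab ac).
  + by have := na' b; rewrite ab.
  + by have := na c; rewrite ac.
  + by apply: ord_inj; lia.
- move=> a b c; rewrite !in_setU.
  case/orP=> [ac|/isa_newprimP[ec _ nc _]]; case/orP=> [bc|/isa_newprimP[ec' _ nc' _]].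
  + exact (pivot_col_uniq hR ac bc).
  + by have := nc' a; rewrite ac.
  + by have := nc b; rewrite bc.
  + by apply: ord_inj; lia.
move=> a b; rewrite isa_step_entry => nz ba.
case: (eqVneq (M a b) 0) => [Mab0|]; last by move/isa_M_low; apply.
rewrite Mab0 add0r in nz.
have /existsP[t] : [exists t, N a t * M t b != 0].
  apply: contraLR nz; rewrite negb_exists negbK => /forallP Nt0.
  by apply/eqP/big1 => t _; apply/eqP; exact: negbNE (Nt0 t).
rewrite mulf_eq0 negb_or => /andP[Nat Mtb]; have ta := isa_N_lt Nat.
by have [k tk kb] := isa_M_low Mtb (ltac:(lia)); exists k => //; lia.
Qed.

End Step.

Lemma isa_iter_invariant (F : fieldType) (m : nat) (D : 'M[F]_m) :
  D *m D = 0 -> (forall a b : 'I_m, D a b != 0 -> (a < b)%N) -> forall k,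
  let: (Dk, Pk) := isa_iter D k in Dk *m Dk = 0 /\ reduced_upto Dk Pk k.+1.
Proof.
move=> DD0 Dtriu; elim=> [|k] /=; first by split=> //; exact: reduced_upto_init.
case: (isa_iter D k) => Dk Pk [DkDk0 hR]; split; last exact: isa_step_reduced.
by apply: conjmx_sq0 => //; have [] := isa_T_unit Dk Pk k.+1.
Qed.

Theorem mainTheorem4 (F : fieldType) (m : nat) (hm : (1 <= m)%N)
    (D : 'M[F]_m) (b : nat) (deg : 'I_m -> nat)
    (hD : connection_matrix D b deg) :
  forall j : 'I_m, col j (isa_final D) != 0 -> row j (isa_final D) = 0.
Proof.
case: hD => _ _ DD0 Dnz j.
have := isa_iter_invariant DD0 (fun a b nz => (Dnz a b nz).1) m.-1.
rewrite /isa_final prednK //; case: (isa_iter D m.-1) => X Pm /= [XX0 hR] colj.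
have [a aj] : exists a, X a j != 0.
  apply/existsP; apply: contraNT colj => /existsPn Xj0.
  by apply/eqP/colP => a; rewrite !mxE; apply/eqP; exact: negbNE (Xj0 a).
by apply/rowP => l; rewrite !mxE; exact: reduced_mulmx_eq0 hR XX0 aj.
Qed.
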